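(* Let $A$ be a finite alphabet, $u,v\in A^*$, $n\in\mathbb{N}$, and $B,C\subseteq A$ subalphabets. If $uB^*C^*B^*v\subseteq[uv]_n$, then $u(B\cup C)^*v\subseteq[uv]_n$.
   Context: $u\sim_n v$ iff $u,v$ have exactly the same (scattered) subwords of length at most $n$; $[w]_n$ denotes the $\sim_n$-equivalence class of $w$. *)

From mathcomp Require Import all_boot.
Set Implicit Arguments. Unset Strict Implicit. Unset Printing Implicit Defensive.

(* Words over a finite alphabet A are sequences [seq A]; a scattered subword
   of t is [subseq s t] (mathcomp). *)

Definition simn (A : finType) (n : nat) (u v : seq A) : Prop :=
  forall w : seq A, size w <= n -> subseq w u = subseq w v.

Definition in_class (A : finType) (n : nat) (w x : seq A) : Prop := simn n x w.

Definition in_star (A : finType) (B : {set A}) (x : seq A) : bool :=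
  all (fun a => a \in B) x.

From mathcomp Require Import all_boot.

(* An embedding of s into u ++ t ++ v that does not factor through u ++ v can
   be cut down to a witness using at most two letters of t: fit the longest
   possible prefix of s into u and the longest possible suffix into v; what
   remains must go into t, and keeping only its first and last letters still
   prevents the shortened word from fitting into u ++ v. Two letters of B :|: C
   always form a word of B^*C^*B^*, so the hypothesis rules out every witness. *)

Set Implicit Arguments.
Unset Strict Implicit.
Unset Printing Implicit Defensive.

Section GreedyEmbedding.
Variable A : eqType.
Implicit Types u v s t P Q m : seq A.

Fixpoint greedy_prefix u s : nat :=
  match u, s with
  | x :: u', a :: s' => if a == x then (greedy_prefix u' s').+1
                        else greedy_prefix u' s
  | _, _ => 0
  end.

Lemma subseq_cat_greedy u s t :
  subseq s (u ++ t) = subseq (drop (greedy_prefix u s) s) t.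
Proof.
elim: u s => [|x u IHu] [|a s] //=; rewrite ?drop0 ?sub0seq //.
by case: eqP => [->|_]; rewrite IHu.
Qed.

Lemma subseq_take_greedy u s : subseq (take (greedy_prefix u s) s) u.
Proof.
elim: u s => [|x u IHu] [|a s] //=; rewrite ?take0 //.
case: eqP => [->|_] /=; first by rewrite eqxx IHu.
exact: subseq_trans (IHu _) (subseq_cons _ _).
Qed.

Definition greedy_suffix v s := greedy_prefix (rev v) (rev s).

Lemma subseq_cat_greedy_suffix v s t :
  subseq s (t ++ v) = subseq (take (size s - greedy_suffix v s) s) t.
Proof. by rewrite -subseq_rev rev_cat subseq_cat_greedy drop_rev subseq_rev. Qed.

Lemma subseq_drop_greedy_suffix v s :
  subseq (drop (size s - greedy_suffix v s) s) v.
Proof. by rewrite -subseq_rev -take_rev subseq_take_greedy. Qed.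

Lemma subseq_cat3_middle u v s : exists P m Q,
  [/\ s = P ++ m ++ Q, subseq P u, subseq Q v &
      forall t, subseq s (u ++ t ++ v) = subseq m t].
Proof.
set r := drop (greedy_prefix u s) s; set k := size r - greedy_suffix v r.
exists (take (greedy_prefix u s) s), (take k r), (drop k r); split.
- by rewrite !cat_take_drop.
- exact: subseq_take_greedy.
- exact: subseq_drop_greedy_suffix.
- by move=> t; rewrite subseq_cat_greedy subseq_cat_greedy_suffix.
Qed.

Lemma subseq_catP s u v : subseq s (u ++ v) ->
  exists s1 s2, [/\ s = s1 ++ s2, subseq s1 u & subseq s2 v].
Proof.
case/subseqP=> b size_b ->.
exists (mask (take (size u) b) u), (mask (drop (size u) b) v).
split; try exact: mask_subseq.
by rewrite -mask_cat ?cat_take_drop // size_takel // size_b size_cat leq_addr.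
Qed.

Lemma subseq_cat_blocked u v P Q a m :
  ~~ subseq (rcons P a) u -> ~~ subseq (last a m :: Q) v ->
  ~~ subseq (P ++ (a :: m) ++ Q) (u ++ v).
Proof.
move=> /negP notPa /negP notbQ; apply/negP=> /subseq_catP [s1 [s2 [def_s s1u s2v]]].
have [le_s1P | lt_Ps1] := leqP (size s1) (size P).
- apply: notbQ; apply: subseq_trans s2v.
  have -> : last a m :: Q = drop (size P + size m) (P ++ (a :: m) ++ Q).
    rewrite drop_cat ltnNge leq_addr /= addKn -cat_cons (lastI a m).
    by rewrite cat_rcons drop_cat size_belast ltnn subnn drop0.
  by rewrite def_s drop_cat ltnNge (leq_trans le_s1P (leq_addr _ _)) drop_subseq.
- apply: notPa; apply: subseq_trans s1u.
  have -> : rcons P a = take (size P).+1 (P ++ (a :: m) ++ Q).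
    by rewrite take_cat ltnNge leqnSn subSnn /= take0 cats1.
  by rewrite def_s takel_cat // take_subseq.
Qed.

Lemma subseq_cat3_two_letters u v t s :
  subseq s (u ++ t ++ v) -> ~~ subseq s (u ++ v) ->
  exists2 t', subseq t' t /\ size t' <= 2 &
    exists2 s', size s' <= size s & subseq s' (u ++ t' ++ v) && ~~ subseq s' (u ++ v).
Proof.
have [P [m [Q [def_s Pu Qv s_mid]]]] := subseq_cat3_middle u v s.
rewrite -[u ++ v]/(u ++ [::] ++ v) !s_mid.
case: m def_s s_mid => [|a m] // def_s s_mid amt _.
(* P and Q are maximal: extending either would leave a middle shorter than m. *)
have notPa : ~~ subseq (rcons P a) u.
  apply: contraFN (ltnn (size m)) => Pa.
  apply: (@size_subseq _ (a :: m)).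
  by rewrite -s_mid def_s /= -cat_rcons cat_subseq // subseq_cat2l.
have notbQ : ~~ subseq (last a m :: Q) v.
  apply: contraFN (ltnn (size m)) => bQ; rewrite -{2}(size_belast a m).
  apply: (@size_subseq _ (a :: m)); rewrite -s_mid def_s (lastI a m) cat_rcons.
  by rewrite cat_subseq // subseq_cat2l.
have [m' [m'm size_m' last_m']] : exists m',
    [/\ subseq m' m, size m' <= 1 & last a m' = last a m].
  case: m {def_s s_mid amt notPa notbQ} => [|b m]; first by exists [::].
  by exists [:: last b m]; rewrite sub1seq mem_last.
exists (a :: m'); first by split; [apply: subseq_trans amt; rewrite /= eqxx |].
exists (P ++ (a :: m') ++ Q).
  by rewrite def_s !size_cat leq_add2l leq_add2r ltnS (size_subseq m'm).
rewrite subseq_cat_blocked ?last_m' // andbT.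
by rewrite cat_subseq // cat_subseq.
Qed.

End GreedyEmbedding.

Lemma in_class_cat3_two_letters (A : finType) n (u v t : seq A) :
  (forall t', subseq t' t -> size t' <= 2 -> in_class n (u ++ v) (u ++ t' ++ v)) ->
  in_class n (u ++ v) (u ++ t ++ v).
Proof.
move=> short_t s size_s; apply/idP/idP => [s_utv | s_uv]; last first.
  by apply: subseq_trans s_uv _; rewrite cat_subseq ?suffix_subseq.
apply: contraT => not_s_uv.
have [t' [t't size_t'] [s' size_s' /andP[s'_ut'v]]] :=
  subseq_cat3_two_letters s_utv not_s_uv.
by rewrite -(short_t t' t't size_t' s' (leq_trans size_s' size_s)) s'_ut'v.
Qed.

Lemma in_star_cat (A : finType) (D : {set A}) (x y : seq A) :
  in_star D (x ++ y) = in_star D x && in_star D y.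
Proof. exact: all_cat. Qed.

Lemma letter_in_star_cat (A : finType) (B C : {set A}) (c : A) :
  c \in B :|: C ->
  exists x y, [/\ in_star B x, in_star C y & [:: c] = x ++ y].
Proof.
rewrite inE; case: (boolP (c \in B)) => [cB _ | _ /= cC].
- by exists [:: c], [::]; rewrite /in_star /= cB.
- by exists [::], [:: c]; rewrite /in_star /= cC.
Qed.

Lemma short_in_star_cat3 (A : finType) (B C : {set A}) (t : seq A) :
  in_star (B :|: C) t -> size t <= 2 ->
  exists x y z, [/\ in_star B x, in_star C y, in_star B z & t = x ++ y ++ z].
Proof.
rewrite {1}/in_star; case: t => [|a [|b []]] //=; rewrite ?andbT.
- by exists [::], [::], [::].
- move=> /letter_in_star_cat [x [y [Bx Cy ->]]] _.
  by exists x, y, [::]; rewrite cats0.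
- move=> /andP[/letter_in_star_cat [x [y [Bx Cy def_a]]]].
  rewrite setUC => /(letter_in_star_cat (B := C)) [y' [z [Cy' Bz def_b]]] _.
  exists x, (y ++ y'), z.
  by rewrite in_star_cat Cy Cy' -cat1s def_a def_b -!catA.
Qed.

Theorem lemma16 (A : finType) (u v : seq A) (n : nat) (B C : {set A}) :
  (forall x y z : seq A, in_star B x -> in_star C y -> in_star B z ->
     in_class n (u ++ v) (u ++ x ++ y ++ z ++ v)) ->
  forall w : seq A, in_star (B :|: C) w -> in_class n (u ++ v) (u ++ w ++ v).
Proof.
move=> BCB_class w w_BC; apply: in_class_cat3_two_letters => t t_w size_t.
have t_BC : in_star (B :|: C) t.
  by apply/allP=> c /(mem_subseq t_w); apply/allP.
have [x [y [z [Bx Cy Bz ->]]]] := short_in_star_cat3 t_BC size_t.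
by rewrite -!catA; apply: BCB_class.
Qed.
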